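(* \[ \frac{7\zeta(3)}{2}=\sum_{n=0}^{\infty}\left(\frac14\right)^n\frac{(1)_n^3}{\left(\frac32\right)_n^3}\Big((6n+4)\,O_{n+1}-1\Big). \]
   Context: $(x)_n=x(x+1)\cdots(x+n-1)$ is the Pochhammer symbol, with $(x)_0=1$. $O_m=\sum_{j=1}^{m}\frac{1}{2j-1}$ is the $m$-th odd harmonic number. $\zeta(3)=\sum_{j\ge1}j^{-3}$ is Apéry's constant. *)

From Stdlib Require Import Reals.
From Coquelicot Require Import Coquelicot.
Open Scope R_scope.

Fixpoint poch (x : R) (n : nat) : R :=
  match n with
  | O => 1
  | S m => poch x m * (x + INR m)
  end.

(* Odd harmonic number O_m = sum_{j=1}^m 1/(2j-1) *)
Fixpoint oddH (m : nat) : R :=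
  match m with
  | O => 0
  | S k => oddH k + / (2 * INR (S k) - 1)
  end.

Definition zeta3 : R := Series (fun j : nat => / (INR (S j)) ^ 3).

Definition apery_term (n : nat) : R :=
  (/ 4) ^ n * (poch 1 n) ^ 3 / (poch (3 / 2) n) ^ 3
    * ((6 * INR n + 4) * oddH (S n) - 1).

From Stdlib Require Import Reals Lra Lia.
From Coquelicot Require Import Coquelicot.
Open Scope R_scope.

(** The series comes from a WZ pair. With the weight
      U(n,k) = 4^-n (1)_n^3 / ((3/2)_n (2k+1)^2 (k+3/2)_n^2)
    and B(n,k) = O_(k+n+1) - O_k, the functions
      F(n,k) = 4 (2n+1) U(n,k) B(n,k),   G(n,k) = U(n,k) ((6n+4+4k) B(n,k) - 1)
    satisfy F(n+1,k) - F(n,k) = G(n,k+1) - G(n,k). Summing over the square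
    [0,N)^2 gives  sum_(n<N) G(n,0) = sum_(k<N) F(0,k) - sum_(k<N) F(N,k) + sum_(n<N) G(n,N),
    where G(n,0) is the n-th term of the series and F(0,k) = 4/(2k+1)^3 sums to
    4 (7/8) zeta(3). Since 0 <= U(n,k) <= 4^-n/(2k+1)^2 and 0 <= B(n,k) <= n+1,
    the last two sums are O(N^3 4^-N) and O(1/N). *)

(* [psum a N] sums the first N terms, whereas Coquelicot's [sum_n a N] sums N + 1. *)
Fixpoint psum (a : nat -> R) (N : nat) : R :=
  match N with
  | O => 0
  | S n => psum a n + a n
  end.

Lemma psum_sum_n a n : psum a (S n) = sum_n a n.
Proof.
  induction n as [|n IH]; cbn [psum].
  - rewrite sum_O. lra.
  - rewrite sum_Sn, <- IH. reflexivity.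
Qed.

Lemma is_series_psum a l : is_series a l <-> is_lim_seq (psum a) l.
Proof.
  change (is_series a l) with (is_lim_seq (sum_n a) l).
  rewrite (is_lim_seq_incr_1 (psum a)).
  split; apply is_lim_seq_ext; intro n; rewrite psum_sum_n; reflexivity.
Qed.

Lemma psum_ext a b N : (forall n, a n = b n) -> psum a N = psum b N.
Proof. intro Hab; induction N as [|N IH]; cbn [psum]; rewrite ?IH, ?Hab; reflexivity. Qed.

Lemma psum_scal c a N : psum (fun n => c * a n) N = c * psum a N.
Proof. induction N as [|N IH]; cbn [psum]; [|rewrite IH]; ring. Qed.

Lemma psum_const c N : psum (fun _ => c) N = INR N * c.
Proof. induction N as [|N IH]; cbn [psum]; [|rewrite IH, S_INR]; simpl; ring. Qed.

Lemma psum_abs_le a b N : (forall n, Rabs (a n) <= b n) -> Rabs (psum a N) <= psum b N.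
Proof.
  intro Hab; induction N as [|N IH]; cbn [psum].
  - rewrite Rabs_R0. lra.
  - specialize (Hab N). pose proof (Rabs_triang (psum a N) (a N)). lra.
Qed.

Lemma psum_half_pow N : psum (fun n => (/ 2) ^ n) N = 2 - 2 * (/ 2) ^ N.
Proof. induction N as [|N IH]; cbn [psum]; [|rewrite IH]; simpl; lra. Qed.

Lemma is_lim_seq_abs_le u v :
  (forall n, Rabs (u n) <= v n) -> is_lim_seq v 0 -> is_lim_seq u 0.
Proof.
  intros Huv Hv. apply is_lim_seq_abs_0.
  apply (is_lim_seq_le_le (fun _ => 0) _ v); [|apply is_lim_seq_const|exact Hv].
  intro n. split; [apply Rabs_pos|apply Huv].
Qed.

Lemma is_lim_seq_div_succ c : is_lim_seq (fun N => c / (INR N + 1)) 0.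
Proof.
  assert (Hinv : is_lim_seq (fun N => / INR (S N)) 0).
  { apply (is_lim_seq_inv (fun N => INR (S N)) p_infty); [|discriminate].
    apply (is_lim_seq_incr_1 INR), is_lim_seq_INR. }
  replace (Finite 0) with (Rbar_mult c 0) by (simpl; f_equal; ring).
  apply (is_lim_seq_ext (fun N => c * / INR (S N))); [|apply is_lim_seq_scal_l, Hinv].
  intro N. rewrite S_INR. reflexivity.
Qed.

Definition inv_cube (j : nat) : R := / INR (S j) ^ 3.
Definition odd_inv_cube (k : nat) : R := / (2 * INR k + 1) ^ 3.

Lemma ex_series_inv_cube : ex_series inv_cube.
Proof.
  apply (@ex_series_le R_AbsRing R_CompleteNormedModule _
           (fun j => 2 * (/ INR (S j) - / INR (S (S j))))).
  - intro j. change norm with Rabs. unfold inv_cube. rewrite !S_INR.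
    pose proof (pos_INR j).
    rewrite Rabs_right by (apply Rle_ge, Rlt_le, Rinv_0_lt_compat, pow_lt; lra).
    apply Rmult_le_reg_r with ((INR j + 1) ^ 3 * (INR j + 1 + 1));
      [apply Rmult_lt_0_compat; [apply pow_lt|]; lra|].
    field_simplify; nra.
  - exists 2. apply is_series_psum.
    apply (is_lim_seq_ext (fun N => 2 - 2 / (INR N + 1))).
    + intro N. induction N as [|N IH]; cbn [psum]; [simpl; lra|].
      rewrite <- IH, !S_INR. pose proof (pos_INR N). field. lra.
    + replace (Finite 2) with (Finite (2 - 0)) by (f_equal; ring).
      apply is_lim_seq_minus'; [apply is_lim_seq_const|apply is_lim_seq_div_succ].
Qed.

Lemma psum_inv_cube_double M :
  psum inv_cube (2 * M) = psum odd_inv_cube M + / 8 * psum inv_cube M.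
Proof.
  induction M as [|M IH]; [simpl; lra|].
  replace (2 * S M)%nat with (S (S (2 * M))) by lia. cbn [psum]. rewrite IH.
  unfold inv_cube, odd_inv_cube. rewrite !S_INR, mult_INR. simpl (INR 2).
  pose proof (pos_INR M). field. lra.
Qed.

Lemma is_series_odd_inv_cube : is_series odd_inv_cube (7 / 8 * zeta3).
Proof.
  apply is_series_psum.
  assert (Hz : is_lim_seq (psum inv_cube) zeta3)
    by apply is_series_psum, Series_correct, ex_series_inv_cube.
  assert (Hz2 : is_lim_seq (fun M => psum inv_cube (2 * M)) zeta3).
  { apply (is_lim_seq_subseq (psum inv_cube)); [|exact Hz].
    apply eventually_subseq. intro n. lia. }
  replace (Finite (7 / 8 * zeta3)) with (Finite (zeta3 - / 8 * zeta3)) by (f_equal; lra).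
  apply (is_lim_seq_ext (fun M => psum inv_cube (2 * M) - / 8 * psum inv_cube M)).
  - intro M. rewrite psum_inv_cube_double. ring.
  - apply is_lim_seq_minus'; [exact Hz2|].
    replace (Finite (/ 8 * zeta3)) with (Rbar_mult (/ 8) zeta3) by reflexivity.
    apply is_lim_seq_scal_l, Hz.
Qed.

Lemma poch_pos x n : 0 < x -> 0 < poch x n.
Proof.
  intro Hx; induction n as [|n IH]; cbn [poch]; [lra|].
  pose proof (pos_INR n). apply Rmult_lt_0_compat; lra.
Qed.

Lemma poch_le x y n : 0 < x <= y -> poch x n <= poch y n.
Proof.
  intro Hxy; induction n as [|n IH]; cbn [poch]; [lra|].
  pose proof (pos_INR n). pose proof (poch_pos x n ltac:(lra)).
  apply Rmult_le_compat; lra.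
Qed.

Lemma poch_succ_mul x n : poch (x + 1) n * x = poch x n * (x + INR n).
Proof.
  induction n as [|n IH]; cbn [poch]; [simpl; ring|].
  rewrite S_INR.
  transitivity (poch (x + 1) n * x * (x + 1 + INR n)); [ring|].
  rewrite IH. ring.
Qed.

Lemma oddH_S m : oddH (S m) = oddH m + / (2 * INR m + 1).
Proof. cbn [oddH]. rewrite S_INR. do 2 f_equal. ring. Qed.

Definition odd_block (n k : nat) : R := oddH (k + S n) - oddH k.

Lemma odd_block_0 n : odd_block n 0 = oddH (S n).
Proof. unfold odd_block. simpl. ring. Qed.

Lemma odd_block_Sn n k :
  odd_block (S n) k = odd_block n k + / (2 * INR k + 2 * INR n + 3).
Proof.
  unfold odd_block. rewrite <- plus_n_Sm, oddH_S, plus_INR, S_INR.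
  replace (2 * (INR k + (INR n + 1)) + 1) with (2 * INR k + 2 * INR n + 3) by ring.
  ring.
Qed.

Lemma odd_block_Sk n k :
  odd_block n (S k) = odd_block n k - / (2 * INR k + 1) + / (2 * INR k + 2 * INR n + 3).
Proof.
  unfold odd_block. rewrite plus_Sn_m, !oddH_S, plus_INR, S_INR.
  replace (2 * (INR k + (INR n + 1)) + 1) with (2 * INR k + 2 * INR n + 3) by ring.
  ring.
Qed.

Lemma odd_block_bounds n k : 0 <= odd_block n k <= INR n + 1.
Proof.
  pose proof (pos_INR k).
  induction n as [|n IH].
  - unfold odd_block. rewrite Nat.add_1_r, oddH_S. simpl (INR 0).
    assert (/ (2 * INR k + 1) <= 1) by (rewrite <- Rinv_1; apply Rinv_le_contravar; lra).
    assert (0 < / (2 * INR k + 1)) by (apply Rinv_0_lt_compat; lra).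
    lra.
  - rewrite odd_block_Sn, S_INR. pose proof (pos_INR n).
    assert (/ (2 * INR k + 2 * INR n + 3) <= 1) by (rewrite <- Rinv_1; apply Rinv_le_contravar; lra).
    assert (0 < / (2 * INR k + 2 * INR n + 3)) by (apply Rinv_0_lt_compat; lra).
    lra.
Qed.

Definition wz_weight (n k : nat) : R :=
  (/ 4) ^ n * poch 1 n ^ 3
  / (poch (3 / 2) n * (2 * INR k + 1) ^ 2 * poch (INR k + 3 / 2) n ^ 2).

Lemma wz_weight_Sn n k :
  wz_weight (S n) k
  = wz_weight n k * (/ 4 * (INR n + 1) ^ 3 / ((3 / 2 + INR n) * (INR k + 3 / 2 + INR n) ^ 2)).
Proof.
  unfold wz_weight. pose proof (pos_INR k). pose proof (pos_INR n).
  pose proof (poch_pos (3 / 2) n ltac:(lra)). pose proof (poch_pos (INR k + 3 / 2) n ltac:(lra)).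
  cbn [poch pow]. field. repeat split; lra.
Qed.

Lemma wz_weight_Sk n k :
  wz_weight n (S k) = wz_weight n k * ((2 * INR k + 1) ^ 2 / (4 * (INR k + INR n + 3 / 2) ^ 2)).
Proof.
  pose proof (pos_INR k). pose proof (pos_INR n).
  pose proof (poch_pos (INR k + 3 / 2) n ltac:(lra)).
  assert (Hshift : poch (INR (S k) + 3 / 2) n
                   = poch (INR k + 3 / 2) n * (INR k + 3 / 2 + INR n) / (INR k + 3 / 2)).
  { rewrite <- poch_succ_mul, S_INR. replace (INR k + 1 + 3 / 2) with (INR k + 3 / 2 + 1) by ring.
    field. lra. }
  unfold wz_weight. rewrite Hshift, S_INR.
  pose proof (poch_pos (3 / 2) n ltac:(lra)).
  field. repeat split; lra.
Qed.

Lemma wz_weight_bounds n k : 0 <= wz_weight n k <= (/ 4) ^ n / (2 * INR k + 1) ^ 2.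
Proof.
  pose proof (pos_INR k).
  pose proof (poch_pos 1 n ltac:(lra)).
  pose proof (poch_le 1 (3 / 2) n ltac:(lra)).
  pose proof (poch_le 1 (INR k + 3 / 2) n ltac:(lra)).
  assert (Hq : 0 < (/ 4) ^ n / (2 * INR k + 1) ^ 2)
    by (apply Rdiv_lt_0_compat; [apply pow_lt|]; nra).
  set (p := poch 1 n) in *. set (a := poch (3 / 2) n) in *.
  set (b := poch (INR k + 3 / 2) n) in *.
  assert (Hratio : 0 <= p ^ 3 / (a * b ^ 2) <= 1).
  { split.
    - apply Rlt_le, Rdiv_lt_0_compat; [apply pow_lt|apply Rmult_lt_0_compat; [|apply pow_lt]]; lra.
    - apply Rmult_le_reg_r with (a * b ^ 2); [apply Rmult_lt_0_compat; [|apply pow_lt]; lra|].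
      field_simplify; [|split; lra].
      assert (p * p <= b * b) by (apply Rmult_le_compat; lra).
      assert (p * (p * p) <= a * (b * b)) by (apply Rmult_le_compat; nra).
      simpl. lra. }
  replace (wz_weight n k) with ((/ 4) ^ n / (2 * INR k + 1) ^ 2 * (p ^ 3 / (a * b ^ 2))).
  - nra.
  - unfold wz_weight. fold p a b. field. repeat split; lra.
Qed.

Definition wzF (n k : nat) : R := 4 * (2 * INR n + 1) * wz_weight n k * odd_block n k.

Definition wzG (n k : nat) : R :=
  wz_weight n k * ((6 * INR n + 4 + 4 * INR k) * odd_block n k - 1).

Lemma wz_pair n k : wzF (S n) k - wzF n k = wzG n (S k) - wzG n k.
Proof.
  unfold wzF, wzG.
  rewrite wz_weight_Sn, wz_weight_Sk, odd_block_Sn, odd_block_Sk, !S_INR.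
  pose proof (pos_INR k). pose proof (pos_INR n).
  field. repeat split; lra.
Qed.

Lemma wzF_0 k : wzF 0 k = 4 * odd_inv_cube k.
Proof.
  unfold wzF, wz_weight, odd_block, odd_inv_cube.
  rewrite Nat.add_1_r, oddH_S. cbn [poch pow INR].
  pose proof (pos_INR k). field. lra.
Qed.

Lemma wzG_0 n : wzG n 0 = apery_term n.
Proof.
  unfold wzG, wz_weight, apery_term. rewrite odd_block_0.
  simpl (INR 0). replace (0 + 3 / 2) with (3 / 2) by ring.
  pose proof (poch_pos (3 / 2) n ltac:(lra)). field. lra.
Qed.

Lemma psum_wz_telescope (F G : nat -> nat -> R) :
  (forall n k, F (S n) k - F n k = G n (S k) - G n k) ->
  forall N K, psum (fun n => G n O) N = psum (F O) K - psum (F N) K + psum (fun n => G n K) N.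
Proof.
  intros Hwz N K.
  assert (Hrow : forall n, psum (F (S n)) K - psum (F n) K = G n K - G n O).
  { intro n. induction K as [|K IH]; cbn [psum]; [lra|]. specialize (Hwz n K). lra. }
  induction N as [|N IH]; cbn [psum]; [lra|]. specialize (Hrow N). lra.
Qed.

Lemma sq_succ_half_pow_le n : (INR n + 1) ^ 2 * (/ 2) ^ n <= 4.
Proof.
  assert (Hpow2 : (INR n + 1) ^ 2 <= 4 * 2 ^ n).
  { destruct n as [|[|n]]; [simpl; lra|simpl; lra|].
    induction n as [|n IH]; [simpl; lra|].
    rewrite !S_INR in *. pose proof (pos_INR n). simpl pow in *. nra. }
  assert (H2 : 2 ^ n * (/ 2) ^ n = 1) by (rewrite <- Rpow_mult_distr, Rinv_r, pow1; lra).
  pose proof (pow_lt (/ 2) n ltac:(lra)).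
  nra.
Qed.

Lemma sq_succ_quarter_pow_le n : (INR n + 1) ^ 2 * (/ 4) ^ n <= 4 * (/ 2) ^ n.
Proof.
  replace ((/ 4) ^ n) with ((/ 2) ^ n * (/ 2) ^ n) by (rewrite <- Rpow_mult_distr; f_equal; lra).
  rewrite <- Rmult_assoc. apply Rmult_le_compat_r.
  - apply pow_le. lra.
  - apply sq_succ_half_pow_le.
Qed.

Lemma wzF_bounds n k : 0 <= wzF n k <= 8 * ((INR n + 1) ^ 2 * (/ 4) ^ n).
Proof.
  destruct (wz_weight_bounds n k) as [Hw0 Hw1]. destruct (odd_block_bounds n k) as [Hb0 Hb1].
  pose proof (pos_INR n). pose proof (pos_INR k). pose proof (pow_lt (/ 4) n ltac:(lra)).
  assert (Hw : wz_weight n k <= (/ 4) ^ n).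
  { eapply Rle_trans; [exact Hw1|].
    apply Rmult_le_reg_r with ((2 * INR k + 1) ^ 2); [nra|]. field_simplify; nra. }
  unfold wzF. split.
  - apply Rmult_le_pos; [apply Rmult_le_pos|]; lra.
  - assert (wz_weight n k * odd_block n k <= (/ 4) ^ n * (INR n + 1))
      by (apply Rmult_le_compat; lra).
    nra.
Qed.

Lemma wzG_bound n k : Rabs (wzG n k) <= 6 * ((INR n + 1) ^ 2 * (/ 4) ^ n) / (2 * INR k + 1).
Proof.
  destruct (wz_weight_bounds n k) as [Hw0 Hw1]. destruct (odd_block_bounds n k) as [Hb0 Hb1].
  pose proof (pos_INR n). pose proof (pos_INR k). pose proof (pow_lt (/ 4) n ltac:(lra)).
  set (c := 6 * INR n + 4 + 4 * INR k).
  assert (Hfac : Rabs (c * odd_block n k - 1) <= c * (INR n + 1) + 1)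
    by (apply Rabs_le; unfold c in *; split; nra).
  assert (Hc : c * (INR n + 1) + 1 <= 6 * (INR n + 1) ^ 2 * (2 * INR k + 1))
    by (unfold c; nra).
  unfold wzG. fold c. rewrite Rabs_mult, (Rabs_right (wz_weight n k)) by lra.
  apply Rle_trans with ((/ 4) ^ n / (2 * INR k + 1) ^ 2 * (c * (INR n + 1) + 1)).
  - apply Rmult_le_compat; [lra|apply Rabs_pos|lra|lra].
  - apply Rmult_le_reg_r with ((2 * INR k + 1) ^ 2); [nra|].
    field_simplify; nra.
Qed.

Lemma is_lim_seq_psum_wzF_diag : is_lim_seq (fun N => psum (wzF N) N) 0.
Proof.
  apply (is_lim_seq_abs_le _ (fun N => 128 / (INR N + 1))); [|apply is_lim_seq_div_succ].
  intro N.
  eapply Rle_trans.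
  { apply (psum_abs_le _ (fun _ => 8 * ((INR N + 1) ^ 2 * (/ 4) ^ N))).
    intro k. destruct (wzF_bounds N k). rewrite Rabs_right; lra. }
  rewrite psum_const.
  pose proof (pos_INR N). pose proof (pow_lt (/ 2) N ltac:(lra)).
  pose proof (sq_succ_half_pow_le N). pose proof (sq_succ_quarter_pow_le N).
  assert (0 <= (INR N + 1) ^ 2 * (/ 4) ^ N) by (apply Rmult_le_pos; [nra|apply pow_le; lra]).
  apply Rmult_le_reg_r with (INR N + 1); [lra|].
  replace (128 / (INR N + 1) * (INR N + 1)) with 128 by (field; lra).
  nra.
Qed.

Lemma is_lim_seq_psum_wzG_edge : is_lim_seq (fun N => psum (fun n => wzG n N) N) 0.
Proof.
  apply (is_lim_seq_abs_le _ (fun N => 48 / (INR N + 1))); [|apply is_lim_seq_div_succ].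
  intro N. pose proof (pos_INR N).
  eapply Rle_trans.
  { apply (psum_abs_le _ (fun n => 24 / (2 * INR N + 1) * (/ 2) ^ n)).
    intro n. eapply Rle_trans; [apply wzG_bound|].
    pose proof (sq_succ_quarter_pow_le n).
    unfold Rdiv.
    replace (24 * / (2 * INR N + 1) * (/ 2) ^ n) with (24 * (/ 2) ^ n * / (2 * INR N + 1)) by ring.
    apply Rmult_le_compat_r; [apply Rlt_le, Rinv_0_lt_compat|]; lra. }
  rewrite psum_scal, psum_half_pow.
  pose proof (pow_lt (/ 2) N ltac:(lra)).
  apply Rmult_le_reg_r with ((2 * INR N + 1) * (INR N + 1)); [nra|].
  field_simplify; nra.
Qed.

Theorem mainTheorem3 : is_series apery_term (7 * zeta3 / 2).
Proof.
  apply is_series_psum.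
  apply (is_lim_seq_ext (fun N => psum (wzF O) N - psum (wzF N) N + psum (fun n => wzG n N) N)).
  { intro N. rewrite <- (psum_wz_telescope wzF wzG wz_pair). apply psum_ext, wzG_0. }
  replace (Finite (7 * zeta3 / 2)) with (Finite (4 * (7 / 8 * zeta3) - 0 + 0)) by (f_equal; lra).
  apply is_lim_seq_plus'; [apply is_lim_seq_minus'|].
  - apply (is_lim_seq_ext (fun N => 4 * psum odd_inv_cube N)).
    { intro N. rewrite <- psum_scal. apply psum_ext. intro k. symmetry. apply wzF_0. }
    apply (is_lim_seq_scal_l _ 4 (7 / 8 * zeta3)), is_series_psum, is_series_odd_inv_cube.
  - apply is_lim_seq_psum_wzF_diag.
  - apply is_lim_seq_psum_wzG_edge.
Qed.
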